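(* Let $G$ and $H$ be Hausdorff locally quasi-convex abelian groups. Let $\mathbb X(G,H)$ be the group of continuous bicharacters of $G\times H$ with the compact-open topology, and let $\mathbb X'(G,H)$ be the group of continuous characters of $\mathbb X(G,H)$ with the topology of uniform convergence on the equicontinuous subsets of $\mathbb X(G,H)$. Let $\mathcal E:G\times H\to\mathbb X'(G,H)$, $\mathcal E(x,y)(b)=b(x,y)$, and let $\mathcal E^{\otimes}:G\otimes H\to\mathbb X'(G,H)$ be the unique continuous homomorphism with $\mathcal E^{\otimes}\circ\otimes=\mathcal E$. Let $T=\mathcal E^{\otimes}(G\otimes H)$ with the subspace topology from $\mathbb X'(G,H)$. Then $(T,\mathcal E)$ is the $\mathcal Q$-tensor product of $G$ and $H$.
   Context: $\mathbb T=\mathbb R/\mathbb Z$ identified with $(-1/2,1/2]$. A continuous bihomomorphism $b:G\times H\to L$ is separately a continuous homomorphism in each variable and continuous at $(0,0)$; a continuous bicharacter is one with values in $\mathbb T$. The compact-open topology on $\mathbb X(G,H)$ has basic neighbourhoods of $0$ the sets $\{b:|b(z)|\le\epsilon\ \forall z\in K\}$, $K\subseteq G\times H$ compact, $\epsilon>0$; the topology on $\mathbb X'(G,H)$ has basic neighbourhoods $\{\psi:|\psi(b)|\le\epsilon\ \forall b\in E\}$, $E$ an equicontinuous subset of $\mathbb X(G,H)$, $\epsilon>0$. $G\otimes H$ denotes the tensor product in the category of all topological abelian groups: $A(G\times H)/N$ where $A(G\times H)$ is the free abelian topological group on the space $G\times H$ with canonical map $\sigma$ and $N$ is generated by the elements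 $\sigma(a+b,c)-\sigma(a,c)-\sigma(b,c)$ and $\sigma(a,c+d)-\sigma(a,c)-\sigma(a,d)$; $\otimes$ is $\sigma$ followed by the quotient map, and every continuous bihomomorphism from $G\times H$ factors uniquely through it via a continuous homomorphism. A subset $A$ of $L$ is quasi-convex if for every $g\notin A$ there is a continuous character $\chi$ with $|\chi(a)|\le1/4$ on $A$ and $|\chi(g)|>1/4$; $\mathcal Q$ is the class of Hausdorff abelian groups with a basis at $0$ of quasi-convex sets. A $\mathcal Q$-tensor product of $G,H\in\mathcal Q$ is a pair $(T,\phi)$ with $T\in\mathcal Q$, $\phi:G\times H\to T$ a continuous bihomomorphism, such that every continuous bihomomorphism $b:G\times H\to B$ with $B\in\mathcal Q$ factors as $b=\tilde b\circ\phi$ with $\tilde b:T\to B$ a continuous homomorphism. *)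

From HB Require Import structures.
From mathcomp Require Import all_boot all_order all_algebra.
From mathcomp Require Import all_classical all_reals all_analysis.
Set Implicit Arguments. Unset Strict Implicit. Unset Printing Implicit Defensive.
Import Order.TTheory GRing.Theory Num.Theory.
Local Open Scope classical_set_scope.
Local Open Scope ring_scope.

(* The circle group T = R/Z is modelled by its canonical representatives     *)
(* in [0,1):  an element of T is a real t with 0 <= t < 1, the group law is  *)
(* addition modulo 1 (via [frac]), and |t| (the absolute value of the        *)
(* representative of t in (-1/2,1/2]) is [tabs t] = min(t, 1-t).  The        *)
(* topology of T is the quotient topology, i.e. the one given by the         *)
(* invariant metric [tdist s t = |s - t|].                                   *)
Section Torus.
Context {R : realType}.

Definition frac (x : R) : R := x - (Num.floor x)%:~R.
Definition tor (t : R) : Prop := 0 <= t /\ t < 1.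
Definition tadd (s t : R) : R := frac (s + t).
Definition tabs (t : R) : R := Num.min t (1 - t).
Definition tdist (s t : R) : R := tabs (frac (s - t)).

(* "Topological abelian groups given concretely": a carrier S : set A       *)
(* inside an ambient type A, an addition [add], and a neighbourhood relation *)
(* [nb a U] ("U is a neighbourhood of a in S"; only U restricted to S        *)
(* matters).  For a topologicalZmodType B we use S = setT, add = +, nb =     *)
(* nbhs; for the subgroup T of X'(G,H) we use its subspace topology.         *)

Definition tcharS {A : Type} (S : set A) (add : A -> A -> A)
    (nb : A -> set A -> Prop) (chi : A -> R) : Prop :=
  [/\ (forall a, S a -> tor (chi a)),
      (forall a b, S a -> S b -> chi (add a b) = tadd (chi a) (chi b)) &
      (forall a, S a -> forall e : R, 0 < e ->
          nb a [set x | tdist (chi x) (chi a) < e])].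

Definition qconvexS {A : Type} (S : set A) (add : A -> A -> A)
    (nb : A -> set A -> Prop) (V : set A) : Prop :=
  forall g, S g -> ~ V g ->
    exists chi, [/\ tcharS S add nb chi,
                    (forall a, S a -> V a -> tabs (chi a) <= 1 / 4) &
                    1 / 4 < tabs (chi g)].

Definition hausdorffS {A : Type} (S : set A) (nb : A -> set A -> Prop) : Prop :=
  forall a b, S a -> S b -> a <> b ->
    exists U V, [/\ nb a U, nb b V & forall x, S x -> U x -> V x -> False].

Definition inQS {A : Type} (S : set A) (add : A -> A -> A) (zero : A)
    (nb : A -> set A -> Prop) : Prop :=
  hausdorffS S nb /\
  forall U, nb zero U ->
    exists V, [/\ nb zero V, (forall a, S a -> V a -> U a) & qconvexS S add nb V].

End Torus.

Definition inQ {R : realType} (B : topologicalZmodType) : Prop :=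
  @inQS R B setT +%R 0 (fun a U => nbhs a U).

Definition cont_bihom (G H L : topologicalZmodType) (b : G -> H -> L) : Prop :=
  [/\ (forall x x' y, b (x + x') y = b x y + b x' y),
      (forall x y y', b x (y + y') = b x y + b x y'),
      (forall y, continuous (fun x => b x y)),
      (forall x, continuous (b x)) &
      ((fun p : G * H => b p.1 p.2) @ nbhs ((0 : G), (0 : H)) --> (0 : L))].

Definition cont_hom (P L : topologicalZmodType) (h : P -> L) : Prop :=
  (forall p q, h (p + q) = h p + h q) /\ continuous h.

Definition is_tensor_product (G H P : topologicalZmodType) (tens : G -> H -> P)
  : Prop :=
  cont_bihom tens /\
  forall (L : topologicalZmodType) (b : G -> H -> L), cont_bihom b ->
    exists h : P -> L, [/\ cont_hom h, (forall x y, h (tens x y) = b x y) &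
      forall h' : P -> L, cont_hom h' -> (forall x y, h' (tens x y) = b x y) ->
        h' = h].

Section Bichar.
Context {R : realType} (G H : topologicalZmodType).

Definition tbichar (b : G -> H -> R) : Prop :=
  [/\ (forall x y, tor (b x y)),
      (forall x x' y, b (x + x') y = tadd (b x y) (b x' y)) /\
      (forall x y y', b x (y + y') = tadd (b x y) (b x y')),
      (forall y x0 (e : R), 0 < e ->
          \forall x \near x0, tdist (b x y) (b x0 y) < e),
      (forall x y0 (e : R), 0 < e ->
          \forall y \near y0, tdist (b x y) (b x y0) < e) &
      (forall e : R, 0 < e ->
          \forall p \near ((0 : G), (0 : H)), tabs (b p.1 p.2) < e)].

Record XT := MkXT { xval : G -> H -> R; xprop : tbichar xval }.

Definition equicont (E : set XT) : Prop :=
  forall (z : G * H) (e : R), 0 < e ->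
    \forall p \near z, forall b, E b -> tdist (xval b p.1 p.2) (xval b z.1 z.2) < e.

Definition xchar (psi : XT -> R) : Prop :=
  [/\ (forall b, tor (psi b)),
      (forall b1 b2 b3 : XT,
         (forall x y, xval b3 x y = tadd (xval b1 x y) (xval b2 x y)) ->
         psi b3 = tadd (psi b1) (psi b2)) &
      (forall (b0 : XT) (e : R), 0 < e ->
         exists (K : set (G * H)) (d : R), [/\ compact K, 0 < d &
           forall b : XT, (forall z, K z -> tdist (xval b z.1 z.2) (xval b0 z.1 z.2) <= d) ->
             tdist (psi b) (psi b0) < e])].

Definition X' : set (XT -> R) := [set psi | xchar psi].
Definition xadd (psi1 psi2 : XT -> R) : XT -> R := fun b => tadd (psi1 b) (psi2 b).
Definition xzero : XT -> R := fun _ => 0.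
Definition xnbhs (S : set (XT -> R)) (psi0 : XT -> R) (U : set (XT -> R)) : Prop :=
  exists (E : set XT) (e : R), [/\ equicont E, 0 < e &
    forall psi, S psi -> (forall b, E b -> tdist (psi b) (psi0 b) <= e) -> U psi].

Definition Emap (x : G) (y : H) : XT -> R := fun b => xval b x y.

Definition cont_hom_X' (P : topologicalZmodType) (Eo : P -> XT -> R) : Prop :=
  [/\ (forall p, X' (Eo p)),
      (forall p q, Eo (p + q) = xadd (Eo p) (Eo q)) &
      (forall p0 U, xnbhs X' (Eo p0) U -> \forall p \near p0, U (Eo p))].

Definition is_Q_tensor_product (S : set (XT -> R)) (phi : G -> H -> XT -> R)
  : Prop :=
  [/\ @inQS R _ S xadd xzero (xnbhs S),
      [/\ (forall x y, S (phi x y)),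
          (forall x x' y, phi (x + x') y = xadd (phi x y) (phi x' y)) /\
          (forall x y y', phi x (y + y') = xadd (phi x y) (phi x y')),
          (forall y x0 U, xnbhs S (phi x0 y) U -> \forall x \near x0, U (phi x y)),
          (forall x y0 U, xnbhs S (phi x y0) U -> \forall y \near y0, U (phi x y)) &
          (forall U, xnbhs S (phi 0 0) U ->
             \forall p \near ((0 : G), (0 : H)), U (phi p.1 p.2))] &
      forall (B : topologicalZmodType) (b : G -> H -> B),
        @inQ R B -> cont_bihom b ->
        exists bt : (XT -> R) -> B,
          [/\ (forall psi1 psi2, S psi1 -> S psi2 ->
                 bt (xadd psi1 psi2) = bt psi1 + bt psi2),
              (forall psi0 U, S psi0 -> nbhs (bt psi0) U ->
                 xnbhs S psi0 [set psi | U (bt psi)]) &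
              (forall x y, b x y = bt (phi x y))]].

End Bichar.

From Pilot Require Import Defs.
From HB Require Import structures.
From mathcomp Require Import all_boot all_order all_algebra.
From mathcomp Require Import all_classical all_reals all_analysis.
From mathcomp Require Import lra zify.
Set Implicit Arguments. Unset Strict Implicit. Unset Printing Implicit Defensive.
Import Order.TTheory GRing.Theory Num.Theory.
Local Open Scope classical_set_scope.
Local Open Scope ring_scope.

(* Points of T are separated by evaluations at bicharacters, which are continuous
   characters of X'(G,H). A basic neighbourhood {psi : |psi| <= e on E} of 0, with E
   equicontinuous, contains the quasi-convex set {psi : |psi| <= 1/4 on 2^j E, j <= k}
   as soon as 2^k e > 1/4, because |2t| = 2|t| in T while |t| <= 1/4.
   For the universal property, let b : G x H -> B with B in Q and h : G (x) H -> B its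
   linearisation. For every continuous character chi of B, chi o b is a bicharacter and
   Eo p (chi o b) = chi (h p), both sides being continuous homomorphisms into T that
   agree on tensors. Since characters separate the points of B, h factors through Eo.
   The factor is continuous: for a quasi-convex neighbourhood V of 0 in B, the set of
   bicharacters chi o b with chi in the polar of V is equicontinuous, and V is the set
   of points on which that polar is bounded by 1/4. *)

(* [fraction.frac] would otherwise hide the fractional part of Defs. *)
Local Notation frac := Defs.frac.

Section DistZ.
Context {R : realType}.
Implicit Types (x y t u v : R) (n : int).

Lemma frac_ge0 x : 0 <= frac x.
Proof. by rewrite /frac subr_ge0 floor_le. Qed.

Lemma frac_lt1 x : frac x < 1.
Proof. have := floorD1_gt x; rewrite /frac intrD => h; lra. Qed.

Lemma frac_tor x : tor (frac x).
Proof. by split; [apply: frac_ge0 | apply: frac_lt1]. Qed.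

Lemma fracDz x n : frac (x + n%:~R) = frac x.
Proof. by rewrite /frac floorDrz ?intr_int // intrKfloor intrD; lra. Qed.

Lemma frac_id t : tor t -> frac t = t.
Proof. by move=> [t0 t1]; rewrite /frac (@floor_def _ t 0) ?subr0 // t0 add0r. Qed.

Lemma frac_idem x : frac (frac x) = frac x.
Proof. exact/frac_id/frac_tor. Qed.

Lemma fracDl x y : frac (frac x + y) = frac (x + y).
Proof.
have -> : frac x + y = x + y + (- Num.floor x)%:~R by rewrite /frac intrN; lra.
exact: fracDz.
Qed.

Lemma fracDr x y : frac (y + frac x) = frac (y + x).
Proof. by rewrite addrC fracDl addrC. Qed.

Lemma fracBr x y : frac (y - frac x) = frac (y - x).
Proof.
have -> : y - frac x = y - x + (Num.floor x)%:~R by rewrite /frac; lra.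
exact: fracDz.
Qed.

Lemma intr_cases n : (n%:~R : R) <= -1 \/ n = 0 \/ 1 <= (n%:~R : R).
Proof.
have : (n <= -1 \/ n = 0 \/ 1 <= n)%R by lia.
case=> [h|[h|h]]; [left | right; left | right; right] => //.
  by rewrite -(intrN R 1) ler_int.
by rewrite -(ler_int R) in h.
Qed.

Definition distZ x := tabs (frac x).

Lemma tdistE s t : tdist s t = distZ (s - t).
Proof. by []. Qed.

Lemma tabs_distZ t : tor t -> tabs t = distZ t.
Proof. by move=> tt; rewrite /distZ frac_id. Qed.

Lemma distZ_le_norm x n : distZ x <= `|x - n%:~R|.
Proof.
have [f0 f1] := frac_tor x.
have -> : x - n%:~R = frac x - (n - Num.floor x)%:~R by rewrite /frac intrB; lra.
rewrite /distZ /tabs ge_min; case: (intr_cases (n - Num.floor x)) => [k|[->|k]].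
- by rewrite ger0_norm; lra.
- by rewrite subr0 ger0_norm // lexx.
- by rewrite ler0_norm; lra.
Qed.

Lemma distZ_norm x : exists n, distZ x = `|x - n%:~R|.
Proof.
rewrite /distZ /tabs; have [f0 f1] := frac_tor x.
case: (leP (frac x) (1 - frac x)) => h.
- by exists (Num.floor x); rewrite /frac in f0 *; rewrite ger0_norm.
- exists (Num.floor x + 1); rewrite /frac in f0 f1 *; rewrite intrD ler0_norm; lra.
Qed.

Lemma distZ_ge0 x : 0 <= distZ x.
Proof. by have [n ->] := distZ_norm x. Qed.

Lemma distZ0 : distZ 0 = 0.
Proof.
apply/le_anti; rewrite distZ_ge0 andbT.
by have := distZ_le_norm 0 0; rewrite subr0 normr0.
Qed.

Lemma distZ_frac x : distZ (frac x) = distZ x.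
Proof. by rewrite /distZ frac_idem. Qed.

Lemma distZDl x y : distZ (frac x + y) = distZ (x + y).
Proof. by rewrite /distZ fracDl. Qed.

Lemma distZBr x y : distZ (y - frac x) = distZ (y - x).
Proof. by rewrite /distZ fracBr. Qed.

Lemma distZN x : distZ (- x) = distZ x.
Proof.
apply/le_anti/andP; split.
  have [n ->] := distZ_norm x; have := distZ_le_norm (- x) (- n).
  by rewrite intrN -opprD normrN.
have [n ->] := distZ_norm (- x); have := distZ_le_norm x (- n).
by rewrite intrN -[x - _]opprK opprD opprK normrN.
Qed.

Lemma distZ_sym x y : distZ (x - y) = distZ (y - x).
Proof. by rewrite -distZN opprB. Qed.

Lemma distZD_le x y : distZ (x + y) <= distZ x + distZ y.
Proof.
have [n ->] := distZ_norm x; have [m ->] := distZ_norm y.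
apply: le_trans (distZ_le_norm _ (n + m)) _.
rewrite intrD (_ : x + y - _ = (x - n%:~R) + (y - m%:~R)); last lra.
exact: ler_normD.
Qed.

Lemma distZ_triangle x y z : distZ (x - z) <= distZ (x - y) + distZ (y - z).
Proof. by have := distZD_le (x - y) (y - z); rewrite (_ : x - y + (y - z) = x - z) //; lra. Qed.

Lemma distZ_eq0 u v : tor u -> tor v -> distZ (u - v) = 0 -> u = v.
Proof.
move=> [? ?] [? ?]; have [n ->] := distZ_norm (u - v) => /normr0_eq0 /eqP uv.
case: (intr_cases n) => [n_le|[n0|n_ge]]; try lra.
by move: uv; rewrite n0 subr0 subr_eq0 => /eqP.
Qed.

Lemma distZ_double t : distZ t <= 1/4 -> distZ (t + t) = 2 * distZ t.
Proof.
have [n ->] := distZ_norm t => small.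
apply/le_anti/andP; split.
  apply: le_trans (distZ_le_norm _ (n + n)) _.
  rewrite intrD (_ : t + t - _ = 2 * (t - n%:~R)); last lra.
  by rewrite normrM (@ger0_norm _ 2).
have [m ->] := distZ_norm (t + t).
have -> : (m%:~R : R) = (m - n - n)%:~R + n%:~R + n%:~R by rewrite !intrB; lra.
move: (m - n - n) => k.
have [tn|tn] := leP 0 (t - n%:~R).
- rewrite ger0_norm // in small *.
  by case: (intr_cases k) => [k_le|[->|k_ge]]; rewrite ler_normr; apply/orP;
    [left | left | right]; lra.
- rewrite ltr0_norm // in small *.
  by case: (intr_cases k) => [k_le|[->|k_ge]]; rewrite ler_normr; apply/orP;
    [left | right | right]; lra.
Qed.

Definition dbl t := frac (t + t).

Lemma distZ_dbl_le u v : distZ (dbl u - dbl v) <= 2 * distZ (u - v).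
Proof.
rewrite /dbl distZDl distZBr.
have := distZD_le (u - v) (u - v).
by rewrite (_ : u - v + (u - v) = u + u - (v + v)); lra.
Qed.

Lemma distZ_iter_dbl_le j u v :
  distZ (iter j dbl u - iter j dbl v) <= 2 ^+ j * distZ (u - v).
Proof.
elim: j => [|j IH]; first by rewrite expr0 mul1r.
rewrite !iterS exprS -mulrA; apply: le_trans (distZ_dbl_le _ _) _.
by rewrite ler_pM2l.
Qed.

Lemma exists_pow2_gt (e : R) : 0 < e -> exists k : nat, 1/4 < e * 2 ^+ k.
Proof.
move=> e0; have h0 : 0 <= 1 / (4 * e) by rewrite divr_ge0 // mulr_ge0 // ltW.
have := archi_boundP h0; set n := Num.Def.archi_bound _ => hn; exists n.
have n_le : (n%:R : R) <= 2 ^+ n by rewrite -natrX ler_nat ltnW // ltn_expl.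
have := lt_le_trans hn n_le; rewrite ltr_pdivrMr ?mulr_gt0 //.
by rewrite mulrCA (mulrC (2 ^+ n)) => h; lra.
Qed.

Lemma distZ_lt_iter_dbl (e : R) (k : nat) t : 1/4 < e * 2 ^+ k ->
  (forall j, (j <= k)%N -> distZ (iter j dbl t) <= 1/4) -> distZ t < e.
Proof.
move=> ek small; rewrite -(ltr_pM2r (exprn_gt0 k (ltr0Sn R 1))).
suff : distZ t * 2 ^+ k <= 1/4 by lra.
elim: k t {ek} small => [|k IH] t small; first by rewrite expr0 mulr1; exact: (small 0%N).
have small_dbl j : (j <= k)%N -> distZ (iter j dbl (dbl t)) <= 1/4.
  by rewrite -iterSr; exact: (small j.+1).
have := IH _ small_dbl.
by rewrite /dbl distZ_frac distZ_double ?(small 0%N) // exprS mulrA (mulrC (distZ t)).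
Qed.

End DistZ.

(* Defs represent T by representatives in [0,1); packaging them as a topologicalZmodType
   lets the universal property of the tensor product be applied with target T. *)
Section Torus.
Variable R : realType.

Record torus := Torus { tval : R; tvalP : (0 <= tval) && (tval < 1) }.
HB.instance Definition _ := [isSub for tval].
HB.instance Definition _ := [Choice of torus by <:].

Definition tproj (x : R) : torus := @Torus (frac x) (introT andP (frac_tor x)).

Lemma tval_tor a : tor (tval a).
Proof. by case: a => t /= /andP. Qed.

Lemma tproj_frac x : tproj (frac x) = tproj x.
Proof. by apply: val_inj; rewrite /= frac_idem. Qed.

Definition tzero := tproj 0.
Definition tplus a b := tproj (tval a + tval b).
Definition topp a := tproj (- tval a).

Lemma tplusA : associative tplus.
Proof. by move=> a b c; apply: val_inj; rewrite /= fracDr fracDl addrA. Qed.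

Lemma tplusC : commutative tplus.
Proof. by move=> a b; apply: val_inj; rewrite /= addrC. Qed.

Lemma tplus0 : left_id tzero tplus.
Proof. by move=> a; apply: val_inj; rewrite /= fracDl add0r frac_id //; apply: tval_tor. Qed.

Lemma tplusN : left_inverse tzero topp tplus.
Proof. by move=> a; apply: val_inj; rewrite /= fracDl addNr. Qed.

HB.instance Definition _ := GRing.isZmodule.Build torus tplusA tplusC tplus0 tplusN.

Lemma tval0 : tval (0 : torus) = 0.
Proof. exact: frac_id. Qed.

Lemma tvalB a b : tval (a - b) = frac (tval a - tval b).
Proof. by rewrite /= fracDr. Qed.

Lemma tprojD x y : tproj (x + y) = tproj x + tproj y.
Proof. by apply: val_inj; rewrite /= fracDl fracDr. Qed.

Definition torus_dist (a b : torus) : R := distZ (tval a - tval b).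

Lemma torus_dist_tproj x y : torus_dist (tproj x) (tproj y) = distZ (x - y).
Proof. by rewrite /torus_dist /= distZDl distZBr. Qed.

Lemma torus_distxx a : torus_dist a a = 0.
Proof. by rewrite /torus_dist subrr distZ0. Qed.

Lemma torus_dist_eq0 a b : torus_dist a b = 0 -> a = b.
Proof. by move=> ab; apply/val_inj/(distZ_eq0 (tval_tor a) (tval_tor b)). Qed.

Lemma torus_distC a b : torus_dist a b = torus_dist b a.
Proof. exact: distZ_sym. Qed.

Lemma torus_dist_triangle b a c : torus_dist a c <= torus_dist a b + torus_dist b c.
Proof. exact: distZ_triangle. Qed.

HB.instance Definition _ := isMetric.Build R torus
  torus_distxx torus_dist_eq0 torus_distC torus_dist_triangle.

Lemma torus_ball a e b : ball a e b = (torus_dist a b < e).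
Proof. by []. Qed.

Lemma torus_sub_continuous : continuous (fun x : torus * torus => x.1 - x.2).
Proof.
move=> [a0 b0]; apply/cvg_ballP => e e0.
have := nbhsx_ballx (a0, b0) (e / 2) (ltac:(lra)).
apply: filterS => -[a b] [/=].
rewrite !torus_ball /torus_dist !tvalB distZDl distZBr (distZ_sym (tval b0)) => a_near b_near.
have := distZD_le (tval a0 - tval a) (tval b - tval b0).
by rewrite (_ : _ + _ = tval a0 - tval b0 - (tval a - tval b)); lra.
Qed.

HB.instance Definition _ :=
  PreTopologicalNmodule_isTopologicalZmodule.Build torus torus_sub_continuous.

End Torus.
Arguments tval {R}.
Arguments tproj {R}.

Lemma additive0 (U V : zmodType) (f : U -> V) : {morph f : p q / p + q} -> f 0 = 0.
Proof. by move=> fD; apply: (addrI (f 0)); rewrite -fD !addr0. Qed.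

Lemma cvgD_tzmod (T : Type) (F : set_system T) {FF : Filter F} (L : topologicalZmodType)
    (f g : T -> L) a b :
  f @ F --> a -> g @ F --> b -> (fun t => f t + g t) @ F --> a + b.
Proof.
move=> fa gb; apply: (@cvg_comp _ _ _ (fun t => (f t, g t)) (fun x : L * L => x.1 + x.2)
  _ (nbhs (a, b))); first exact: cvg_pair.
exact: (@add_continuous L (a, b)).
Qed.

Lemma cvgB_tzmod (T : Type) (F : set_system T) {FF : Filter F} (L : topologicalZmodType)
    (f : T -> L) a : f @ F --> a -> (fun t => f t - a) @ F --> 0.
Proof. by move=> fa; rewrite -(subrr a); apply: cvgD_tzmod fa (cvg_cst _). Qed.

Lemma natmul_continuous_tzmod (L : topologicalZmodType) n :
  continuous (fun w : L => w *+ n).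
Proof.
elim: n => [|n IH] w; first exact: cvg_cst.
rewrite (_ : (fun w : L => w *+ n.+1) = (fun w => w + w *+ n)) ?mulrS.
  exact: (cvgD_tzmod cvg_id (IH w)).
by apply/funext => v; rewrite mulrS.
Qed.

(* The decomposition b x y = b x y0 + b x0 (y - y0) + b (x - x0) (y - y0) reduces
   continuity at (x0, y0) to separate continuity and continuity at (0, 0). *)
Lemma cont_bihom_cvg (G H L : topologicalZmodType) (b : G -> H -> L) :
  cont_bihom b -> forall z : G * H, (fun p : G * H => b p.1 p.2) @ z --> b z.1 z.2.
Proof.
move=> [bDl bDr bcx bcy bc0] [x0 y0] /=.
have decomp x y : b x y = b x y0 + b x0 (y - y0) + b (x - x0) (y - y0).
  by rewrite -addrA -bDl addrCA subrr addr0 -bDr addrCA subrr addr0.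
rewrite (funext (fun p : G * H => decomp p.1 p.2)) -[b x0 y0]addr0 -[b x0 y0]addr0.
apply: cvgD_tzmod; first apply: cvgD_tzmod.
- apply: (@cvg_comp _ _ _ fst (b^~ y0) _ (nbhs x0)); [exact: cvg_fst | exact: bcx].
- rewrite -(additive0 (bDr x0)).
  apply: (@cvg_comp _ _ _ (fun p : G * H => p.2 - y0) (b x0) _ (nbhs 0)); last exact: bcy.
  by apply: cvgB_tzmod; exact: cvg_snd.
- apply: (@cvg_comp _ _ _ (fun p : G * H => (p.1 - x0, p.2 - y0))
    (fun q : G * H => b q.1 q.2) _ (nbhs (0, 0))) => //.
  by apply: cvg_pair; apply: cvgB_tzmod; [exact: cvg_fst | exact: cvg_snd].
Qed.

Lemma cont_hom_comp (K L M : topologicalZmodType) (f : K -> L) (g : L -> M) :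
  cont_hom f -> cont_hom g -> cont_hom (fun p => g (f p)).
Proof.
move=> [fD fc] [gD gc]; split=> [p q|p]; first by rewrite fD gD.
by apply: (@cvg_comp _ _ _ f g _ (nbhs (f p))); [exact: fc | exact: gc].
Qed.

Lemma cont_hom_comp_bihom (G H L M : topologicalZmodType) (f : L -> M) (b : G -> H -> L) :
  cont_hom f -> cont_bihom b -> cont_bihom (fun x y => f (b x y)).
Proof.
move=> [fD fc] [bDl bDr bcx bcy bc0]; split.
- by move=> x x' y; rewrite bDl fD.
- by move=> x y y'; rewrite bDr fD.
- move=> y x; apply: (@cvg_comp _ _ _ (b^~ y) f _ (nbhs (b x y)));
    [exact: bcx | exact: fc].
- move=> x y; apply: (@cvg_comp _ _ _ (b x) f _ (nbhs (b x y)));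
    [exact: bcy | exact: fc].
- rewrite -(additive0 fD).
  by apply: (@cvg_comp _ _ _ (fun p : G * H => b p.1 p.2) f _ (nbhs 0)); last exact: fc.
Qed.

Lemma tensor_hom_ext (G H P L : topologicalZmodType) (tens : G -> H -> P) (h1 h2 : P -> L) :
  is_tensor_product tens -> cont_hom h1 -> cont_hom h2 ->
  (forall x y, h1 (tens x y) = h2 (tens x y)) -> h1 = h2.
Proof.
move=> [tens_bihom tens_univ] h1c h2c h12.
have [h [_ _ h_uniq]] := tens_univ L _ (cont_hom_comp_bihom h1c tens_bihom).
by rewrite (h_uniq h1 h1c) // (h_uniq h2 h2c) // => x y; rewrite h12.
Qed.

Lemma cont_hom_natmul (L : topologicalZmodType) n : cont_hom (fun u : L => u *+ n).
Proof. by split=> [u v|]; [exact: mulrnDl | exact: natmul_continuous_tzmod]. Qed.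

Section Characters.
Variables (R : realType) (B : topologicalZmodType).

Definition tchar (chi : B -> R) := @tcharS R B setT +%R (fun a U => nbhs a U) chi.

Lemma tchar_cont_hom chi :
  tchar chi -> (forall a, tor (chi a)) /\ cont_hom (fun a => tproj (chi a)).
Proof.
move=> [ctor cD cc]; split=> [a|]; first exact: ctor.
split=> [p q|p0]; first by rewrite cD // /tadd tproj_frac tprojD.
apply/cvg_ballP => e e0; apply: filterS (cc p0 I e e0) => p /=.
by rewrite torus_ball torus_dist_tproj distZ_sym.
Qed.

Lemma tcharB chi u v : tchar chi -> chi (u - v) = frac (chi u - chi v).
Proof.
move=> [ctor cD _]; rewrite -{2}(subrK v u) (cD (u - v) v) // /tadd fracDl addrK frac_id //.
exact: ctor.
Qed.

Lemma tchar_natmul chi w j : tchar chi -> chi (w *+ 2 ^ j) = iter j dbl (chi w).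
Proof.
move=> [_ cD _]; elim: j => [|j IH] /=; first by rewrite expn0.
by rewrite expnSr mulrnA mulr2n cD // IH.
Qed.

Lemma inQ_tchar_separates : @inQ R B ->
  forall u v : B, (forall chi, tchar chi -> chi u = chi v) -> u = v.
Proof.
move=> [B_haus B_basis] u v chi_uv; apply: contrapT => uv.
have [U [W [Uuv W0 UW]]] := B_haus (u - v) 0 I I (fun e => uv (subr0_eq e)).
have [V [V0 VW Vqc]] := B_basis W W0.
have [|chi [chic _]] := Vqc (u - v) I.
  by move=> Vuv; apply: (UW _ I (nbhs_singleton Uuv) (VW _ I Vuv)).
by rewrite tcharB // chi_uv // subrr -/(distZ 0) distZ0; lra.
Qed.

End Characters.

Section Bicharacters.
Variables (R : realType) (G H : topologicalZmodType).
Local Notation XT := (@XT R G H).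

Lemma tbichar_cont_bihom (g : G -> H -> R) :
  tbichar g -> cont_bihom (fun x y => tproj (g x y)).
Proof.
move=> [gtor [gDl gDr] gcx gcy gc0]; split.
- by move=> x x' y; rewrite gDl /tadd tproj_frac tprojD.
- by move=> x y y'; rewrite gDr /tadd tproj_frac tprojD.
- move=> y x0; apply/cvg_ballP => e e0; apply: filterS (gcx y x0 e e0) => x.
  by rewrite torus_ball torus_dist_tproj distZ_sym.
- move=> x y0; apply/cvg_ballP => e e0; apply: filterS (gcy x y0 e e0) => y.
  by rewrite torus_ball torus_dist_tproj distZ_sym.
- apply/cvg_ballP => e e0; apply: filterS (gc0 e e0) => p.
  by rewrite torus_ball /torus_dist tval0 /= distZBr sub0r distZN -tabs_distZ.
Qed.

Lemma cont_bihom_tbichar (g : G -> H -> R) :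
  (forall x y, tor (g x y)) -> cont_bihom (fun x y => tproj (g x y)) -> tbichar g.
Proof.
move=> gtor [gDl gDr gcx gcy gc0].
have tprojK_g x y : tval (tproj (g x y)) = g x y by rewrite /= frac_id.
split=> //.
- split=> [x x' y|x y y'].
  + by rewrite -tprojK_g gDl /= fracDl fracDr.
  + by rewrite -tprojK_g gDr /= fracDl fracDr.
- move=> y x0 e e0; apply: filterS (cvg_ball (gcx y x0) e0) => x.
  by rewrite torus_ball torus_dist_tproj distZ_sym.
- move=> x y0 e e0; apply: filterS (cvg_ball (gcy x y0) e0) => y.
  by rewrite torus_ball torus_dist_tproj distZ_sym.
- move=> e e0; apply: filterS (cvg_ball gc0 e0) => p.
  by rewrite torus_ball /torus_dist tval0 /= distZBr sub0r distZN tabs_distZ.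
Qed.

Lemma tbichar_comp (B : topologicalZmodType) (b : G -> H -> B) (chi : B -> R) :
  cont_bihom b -> tchar chi -> tbichar (fun x y => chi (b x y)).
Proof.
move=> bb /tchar_cont_hom[ctor chom].
exact: cont_bihom_tbichar (cont_hom_comp_bihom chom bb).
Qed.

Lemma tbichar_dbl (g : G -> H -> R) : tbichar g -> tbichar (fun x y => dbl (g x y)).
Proof.
move=> gb; apply: cont_bihom_tbichar => [x y|]; first exact: frac_tor.
rewrite (_ : (fun x y => _) = (fun x y => tproj (g x y) *+ 2)).
  exact: cont_hom_comp_bihom (cont_hom_natmul _ 2) (tbichar_cont_bihom gb).
by apply/funext => x; apply/funext => y; rewrite /dbl tproj_frac tprojD mulr2n.
Qed.

Definition xdouble (b : XT) : XT := MkXT (tbichar_dbl (xprop b)).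

Lemma xval_iter_xdouble j (b : XT) x y :
  xval (iter j xdouble b) x y = iter j dbl (xval b x y).
Proof. by elim: j => //= j ->. Qed.

Lemma xchar_iter_xdouble (psi : XT -> R) j (b : XT) :
  xchar psi -> psi (iter j xdouble b) = iter j dbl (psi b).
Proof. by move=> [_ psiD _]; elim: j => //= j <-; apply: psiD. Qed.

Lemma equicont1 (b0 : XT) : equicont [set b0].
Proof.
move=> z e e0; have b0z := cont_bihom_cvg (z := z) (tbichar_cont_bihom (xprop b0)).
apply: filterS (cvg_ball b0z e0) => p; rewrite torus_ball torus_dist_tproj distZ_sym.
by move=> pz b ->.
Qed.

Lemma xnbhs_eval (S : set (XT -> R)) (psi0 : XT -> R) (beta : XT) (e : R) :
  0 < e -> xnbhs S psi0 [set psi | tdist (psi beta) (psi0 beta) < e].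
Proof.
move=> e0; exists [set beta], (e / 2); split; [exact: equicont1 | lra |].
by move=> psi _ /(_ beta erefl) /=; lra.
Qed.

Lemma xnbhs_X' (S : set (XT -> R)) (psi0 : XT -> R) (U : set (XT -> R)) :
  xnbhs S psi0 U -> xnbhs (@X' R G H) psi0 [set psi | S psi -> U psi].
Proof. by move=> [E [e [Ee e0 EU]]]; exists E, e; split=> // psi _ ? ?; apply: EU. Qed.

Lemma equicont_iter_xdouble (E : set XT) k : equicont E ->
  equicont [set beta | exists j, (j <= k)%N /\ exists b, E b /\ beta = iter j xdouble b].
Proof.
move=> Ee z e e0; have pow_gt0 j : (0 : R) < 2 ^+ j by apply: exprn_gt0.
apply: filterS (Ee z _ (divr_gt0 e0 (pow_gt0 k))) => p pz _ [j [jk [b [Eb ->]]]].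
rewrite tdistE !xval_iter_xdouble; apply: le_lt_trans (distZ_iter_dbl_le _ _ _) _.
have pow_le : (2 ^+ j : R) <= 2 ^+ k by rewrite -!natrX ler_nat leq_exp2l.
apply: lt_le_trans (_ : 2 ^+ j * (e / 2 ^+ k) <= e); first by rewrite ltr_pM2l ?pz.
by rewrite mulrA ler_pdivrMr // mulrC ler_pM2l.
Qed.

Definition polar_bichar (B : topologicalZmodType) (b : G -> H -> B) (V : set B) : set XT :=
  [set beta | exists chi, [/\ tchar chi, (forall a, V a -> tabs (chi a) <= 1/4) &
                              forall x y, xval beta x y = chi (b x y)]].

(* Near z, (b p - b z) *+ 2^j stays in V for all j <= k, so chi (b p - b z) is within
   2^-k/4 of Z for every chi in the polar of V. *)
Lemma equicont_polar (B : topologicalZmodType) (b : G -> H -> B) (V : set B) :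
  cont_bihom b -> nbhs 0 V -> equicont (polar_bichar b V).
Proof.
move=> bb V0 z e e0; have [k ek] := exists_pow2_gt e0.
have W0 : \forall w \near (0 : B), forall j, (j <= k)%N -> V (w *+ 2 ^ j).
  have : \forall w \near (0 : B), forall i : 'I_k.+1, V (w *+ 2 ^ i).
    apply: filter_forall => i; apply: (@natmul_continuous_tzmod B (2 ^ i) 0).
    by rewrite mul0rn.
  by apply: filterS => w Vw j; rewrite -ltnS => jk; exact: (Vw (Ordinal jk)).
have Wz : \forall p \near z, forall j, (j <= k)%N -> V ((b p.1 p.2 - b z.1 z.2) *+ 2 ^ j).
  exact: (cvgB_tzmod (FF := nbhs_filter z) (cont_bihom_cvg (z := z) bb) W0).
apply: filterS Wz => p pz beta [chi [chic chiV beta_chi]].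
rewrite tdistE !beta_chi -distZ_frac -tcharB //; apply: (distZ_lt_iter_dbl ek) => j jk.
by rewrite -tchar_natmul // -tabs_distZ; [exact/chiV/pz | exact: (tchar_cont_hom chic).1].
Qed.

End Bicharacters.

Section QTensorProduct.
Variables (R : realType) (G H P : topologicalZmodType) (tens : G -> H -> P).
Variable Eo : P -> @XT R G H -> R.
Hypotheses (htens : is_tensor_product tens) (hEo : cont_hom_X' Eo)
  (hEotens : forall x y, Eo (tens x y) = Emap x y).
Local Notation XT := (@XT R G H).
Local Notation S := (range Eo).
Local Notation xzero := (@xzero R G H).
Local Notation xdouble := (@xdouble R G H).

Lemma range_xchar psi : S psi -> xchar psi.
Proof. by case: hEo => Eo_X' _ _ [p _ <-]; exact: Eo_X'. Qed.

Lemma range_tor psi beta : S psi -> tor (psi beta).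
Proof. by move=> /range_xchar[]. Qed.

Lemma EoD p q : Eo (p + q) = xadd (Eo p) (Eo q).
Proof. by case: hEo. Qed.

Lemma Eo_near_range (T : Type) (F : set_system T) {FF : Filter F} (f : T -> P) p0 U :
  f @ F --> p0 -> xnbhs S (Eo p0) U -> \forall t \near F, U (Eo (f t)).
Proof.
move=> fp0 /xnbhs_X' U'; have [_ _ Eoc] := hEo.
have Ft : F [set t | S (Eo (f t)) -> U (Eo (f t))] := fp0 _ (Eoc p0 _ U').
by apply: filterS Ft => t; apply; exists (f t).
Qed.

Lemma Eo_eval_cont_hom (beta : XT) : cont_hom (fun p => tproj (Eo p beta)).
Proof.
split=> [p q|p0]; first by rewrite EoD /xadd /tadd tproj_frac tprojD.
apply/cvg_ballP => e e0; apply: filterS (Eo_near_range cvg_id (xnbhs_eval _ _ beta e0)) => p.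
by rewrite torus_ball torus_dist_tproj distZ_sym.
Qed.

Lemma range_hausdorff : hausdorffS S (xnbhs S).
Proof.
move=> _ _ [p _ <-] [q _ <-] pq.
have [beta pq_beta] : exists beta, Eo p beta <> Eo q beta.
  by apply/existsNP => eq_pq; apply/pq/funext.
set d := distZ (Eo p beta - Eo q beta).
have d_gt0 : 0 < d.
  rewrite lt_neqAle distZ_ge0 andbT eq_sym; apply/eqP => d0.
  by apply/pq_beta/(distZ_eq0 _ _ d0); apply: range_tor; [exists p | exists q].
exists [set psi | tdist (psi beta) (Eo p beta) < d / 2],
       [set psi | tdist (psi beta) (Eo q beta) < d / 2].
split; [apply: xnbhs_eval; lra | apply: xnbhs_eval; lra | move=> psi _ /=].
rewrite !tdistE (distZ_sym (psi beta)) => near_p near_q.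
by have := distZ_triangle (Eo p beta) (psi beta) (Eo q beta); rewrite -/d; lra.
Qed.

Lemma range_qconvex_basis U : xnbhs S xzero U ->
  exists V, [/\ xnbhs S xzero V, (forall a, S a -> V a -> U a) &
                @qconvexS R _ S (@xadd R G H) (xnbhs S) V].
Proof.
move=> [E [e [Ee e0 EU]]]; have [k ek] := exists_pow2_gt e0.
set E' := [set beta | exists j, (j <= k)%N /\ exists b, E b /\ beta = iter j xdouble b].
exists [set psi | forall beta, E' beta -> tabs (psi beta) <= 1/4]; split.
- exists E', (1/4); split=> //; first exact: equicont_iter_xdouble.
  move=> psi Spsi small beta E'beta; rewrite tabs_distZ; last exact: range_tor.
  by have := small beta E'beta; rewrite tdistE /xzero subr0.
- move=> psi Spsi small; apply: EU => // b Eb.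
  rewrite tdistE /xzero subr0; apply/ltW/(distZ_lt_iter_dbl ek) => j jk.
  rewrite -(xchar_iter_xdouble _ _ (range_xchar Spsi)) -tabs_distZ; last exact: range_tor.
  by apply: small; exists j; split=> //; exists b.
- move=> g Sg not_small.
  have [beta /not_implyP [E'beta big]] : exists beta, ~ (E' beta -> tabs (g beta) <= 1/4).
    by apply/existsNP.
  exists (fun psi => psi beta); split.
  + split=> [a Sa | // | a Sa e1 e1_gt0]; first exact: range_tor.
    exact: xnbhs_eval.
  + by move=> a _; apply.
  + by rewrite ltNge; apply/negP.
Qed.

Lemma range_inQ : @inQS R _ S (@xadd R G H) xzero (xnbhs S).
Proof. by split; [exact: range_hausdorff | exact: range_qconvex_basis]. Qed.

Section Universal.
Variables (B : topologicalZmodType) (b : G -> H -> B) (h : P -> B).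
Hypotheses (hB : @inQ R B) (hb : cont_bihom b) (hh : cont_hom h)
  (hht : forall x y, h (tens x y) = b x y).

Lemma Eo_tbichar_comp chi (chic : tchar chi) p :
  Eo p (MkXT (tbichar_comp hb chic)) = chi (h p).
Proof.
have [chi_tor chi_hom] := tchar_cont_hom chic.
have := congr1 (fun f => tval (f p)) (tensor_hom_ext htens
  (Eo_eval_cont_hom (MkXT (tbichar_comp hb chic))) (cont_hom_comp hh chi_hom) _).
rewrite /= !frac_id //; last by apply: range_tor; exists p.
by apply; move=> x y; rewrite hEotens /= hht.
Qed.

Lemma h_Eo_inj p q : Eo p = Eo q -> h p = h q.
Proof.
move=> pq; apply: (inQ_tchar_separates hB) => chi chic.
by rewrite -(Eo_tbichar_comp chic p) -(Eo_tbichar_comp chic q) pq.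
Qed.

Definition factor_map (psi : XT -> R) : B :=
  if pselect (exists p, Eo p = psi) is left ex then h (projT1 (cid ex)) else 0.

Lemma factor_mapE p : factor_map (Eo p) = h p.
Proof.
rewrite /factor_map; case: pselect => [ex | []]; last by exists p.
exact/h_Eo_inj/(projT2 (cid ex)).
Qed.

Lemma factor_map_cont psi0 U : S psi0 -> nbhs (factor_map psi0) U ->
  xnbhs S psi0 [set psi | U (factor_map psi)].
Proof.
move=> [p0 _ <-]; rewrite factor_mapE => U_hp0.
have U0 : nbhs (0 : B) [set w | U (w + h p0)].
  by apply: (cvgD_tzmod cvg_id (cvg_cst (h p0))); rewrite add0r.
have [_ B_basis] := hB; have [V [V0 VU Vqc]] := B_basis _ U0.
exists (polar_bichar b V), (1/4); split; [exact: equicont_polar | lra |].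
move=> _ [p _ <-] near_p0; rewrite /= factor_mapE -(subrK (h p0) (h p)).
apply: (VU _ I); apply: contrapT => notV; have [chi [chic chiV]] := Vqc _ I notV.
have chi_polar : polar_bichar b V (MkXT (tbichar_comp hb chic)).
  by exists chi; split=> // a; apply: chiV.
have := near_p0 _ chi_polar; rewrite !Eo_tbichar_comp tdistE -distZ_frac -tcharB //.
by rewrite -tabs_distZ; [lra | exact: (tchar_cont_hom chic).1].
Qed.

Lemma range_universal : exists bt : (XT -> R) -> B,
  [/\ (forall psi1 psi2, S psi1 -> S psi2 -> bt (xadd psi1 psi2) = bt psi1 + bt psi2),
      (forall psi0 U, S psi0 -> nbhs (bt psi0) U -> xnbhs S psi0 [set psi | U (bt psi)]) &
      (forall x y, b x y = bt (Emap x y))].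
Proof.
exists factor_map; split.
- by move=> _ _ [p _ <-] [q _ <-]; rewrite -EoD !factor_mapE (proj1 hh).
- exact: factor_map_cont.
- by move=> x y; rewrite -hEotens factor_mapE hht.
Qed.

End Universal.
End QTensorProduct.

Theorem theorem3p6 (R : realType) (G H : topologicalZmodType)
  (hG : @inQ R G) (hH : @inQ R H)
  (P : topologicalZmodType) (tens : G -> H -> P)
  (htens : is_tensor_product tens)
  (Eo : P -> @XT R G H -> R)
  (hEo : cont_hom_X' Eo)
  (hEotens : forall x y, Eo (tens x y) = Emap x y) :
  is_Q_tensor_product (range Eo) (@Emap R G H).
Proof.
have [[tens_Dl tens_Dr tens_cx tens_cy tens_c0] tens_univ] := htens.
have Emap_tens : @Emap R G H = fun x y => Eo (tens x y).
  by apply/funext => x; apply/funext => y; rewrite hEotens.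
split.
- exact: (range_inQ hEo).
- rewrite Emap_tens; split.
  + by move=> x y; exists (tens x y).
  + by split=> *; rewrite (tens_Dl, tens_Dr) (EoD hEo).
  + by move=> y x0 U; apply/(Eo_near_range hEo (f := tens^~ y))/tens_cx.
  + by move=> x y0 U; apply/(Eo_near_range hEo (f := tens x))/tens_cy.
  + move=> U; rewrite (additive0 (tens_Dr 0)).
    exact/(Eo_near_range hEo (FF := nbhs_filter ((0 : G), (0 : H))) tens_c0).
- move=> B b hB hb; have [h [hh hht _]] := tens_univ B b hb.
  exact: (range_universal htens hEo hEotens hB hb hh hht).
Qed.
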